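(* Let $V$ be a finite set and $d:V\times V\to\mathbb{R}_{\ge0}$ a semi-metric (symmetric, $d(i,i)=0$). Let $s\ge1$ be such that $d(i,j)\le s\,(d(i,k)+d(k,j))$ for all $i,j,k\in V$. Let $\pi:V\to\mathbb{R}_+$ with $\pi(V)=1$ and suppose $\sum_{i,j\in V}\pi(i)\pi(j)d(i,j)=2$. Let $L\subseteq V$ be nonempty with $\mathrm{diam}(L)=\max_{i,j\in L}d(i,j)$. Then $$\sum_{i\notin L}\pi(i)\,d(i,L)\ge\frac{1}{s^2}-\frac12\,\mathrm{diam}(L).$$
   Context: $d(i,L)=\min_{j\in L}d(i,j)$; $\pi(A)=\sum_{i\in A}\pi(i)$. *)

From mathcomp Require Import all_boot all_order all_algebra.
Set Implicit Arguments. Unset Strict Implicit. Unset Printing Implicit Defensive.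
Import Order.TTheory GRing.Theory Num.Theory.
Local Open Scope ring_scope.

(* d(i,L) = min_{j in L} d(i,j); for empty L it defaults to d i i (irrelevant,
   the theorem assumes L nonempty). *)
Definition dist_set (R : realDomainType) (V : finType) (d : V -> V -> R)
    (i : V) (L : {set V}) : R :=
  match [pick j in L] with
  | Some j0 => \big[Num.min/d i j0]_(j in L) d i j
  | None => d i i
  end.

(* diam(L) = max_{i,j in L} d(i,j) (distances are nonnegative, so 0 is a valid seed). *)
Definition diam (R : realDomainType) (V : finType) (d : V -> V -> R)
    (L : {set V}) : R :=
  \big[Num.max/0]_(i in L) \big[Num.max/0]_(j in L) d i j.

From mathcomp Require Import all_boot all_order all_algebra.
From mathcomp Require Import ring lra.
Import Order.TTheory GRing.Theory Num.Theory.
Local Open Scope ring_scope.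

(* Going from i to j through nearest points a, b of L, the relaxed triangle
   inequality gives d(i,j) <= s^2 (d(i,L) + diam L + d(j,L)).  Averaging this
   against pi (x) pi, the left side averages to 2 and the right side to
   s^2 (2 X + diam L), where X = sum_i pi(i) d(i,L) is exactly the sum over
   i outside L, since d(i,L) = 0 on L. *)

Section DistSet.

Context {R : realDomainType} {V : finType} (d : V -> V -> R) (L : {set V}).

Lemma dist_set_le i j : j \in L -> dist_set d i L <= d i j.
Proof.
move=> Lj; rewrite /dist_set; case: pickP => [j0 _|/(_ j)]; last by rewrite Lj.
exact: bigmin_le_cond.
Qed.

Lemma dist_set_attained i : L != set0 -> exists2 j, j \in L & dist_set d i L = d i j.
Proof.
move=> /set0Pn [j Lj]; rewrite /dist_set.
case: pickP => [j0 Lj0|/(_ j)]; last by rewrite Lj.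
apply: (big_ind (fun x => exists2 j, j \in L & x = d i j)) => [|x y|k Lk].
- by exists j0.
- move=> [a La ->] [b Lb ->]; case: leP => _; [exists a | exists b] => //.
- by exists k.
Qed.

Lemma dist_set_mem (d_ge0 : forall i j, 0 <= d i j) (d_ii : forall i, d i i = 0) i :
  i \in L -> dist_set d i L = 0.
Proof.
move=> Li; apply/eqP; rewrite eq_le -{1}(d_ii i) dist_set_le //=.
have [|j _ ->] := dist_set_attained i; last exact: d_ge0.
by apply/set0Pn; exists i.
Qed.

Lemma le_diam {a b} : a \in L -> b \in L -> d a b <= diam d L.
Proof.
move=> La Lb; apply: le_trans (le_bigmax_cond _ _ La).
exact: (le_bigmax_cond _ _ Lb).
Qed.

End DistSet.

Section RelaxedTriangle.

Context {R : realDomainType} {V : finType} (d : V -> V -> R) (s : R).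
Hypothesis d_ge0 : forall i j, 0 <= d i j.
Hypothesis s_ge1 : 1 <= s.
Hypothesis d_tri : forall i j k, d i j <= s * (d i k + d k j).

Lemma relaxed_triangle4 i a b j : d i j <= s ^+ 2 * (d i a + d a b + d b j).
Proof.
have s_ge0 : 0 <= s by apply: le_trans s_ge1.
have s_le_s2 : s * d i a <= s ^+ 2 * d i a.
  by rewrite expr2 -mulrA ler_peMl // mulr_ge0.
have via_b : s * d a j <= s ^+ 2 * (d a b + d b j).
  by rewrite expr2 -mulrA ler_wpM2l.
apply: le_trans (d_tri i j a) _; lra.
Qed.

Hypothesis d_sym : forall i j, d i j = d j i.

Lemma le_dist_set_diam (L : {set V}) i j : L != set0 ->
  d i j <= s ^+ 2 * (dist_set d i L + dist_set d j L + diam d L).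
Proof.
move=> L_nonempty.
have [a La ->] := dist_set_attained d L i L_nonempty.
have [b Lb ->] := dist_set_attained d L j L_nonempty.
apply: le_trans (relaxed_triangle4 i a b j) _.
rewrite (d_sym b j) ler_wpM2l ?exprn_ge0 ?(le_trans _ s_ge1) //.
have := le_diam d L La Lb; lra.
Qed.

End RelaxedTriangle.

Lemma double_sum_weighted_add {R : comNzRingType} {I : finType} (pi f : I -> R) c :
  \sum_i pi i = 1 ->
  \sum_i \sum_j pi i * pi j * (f i + f j + c) = 2 * \sum_i pi i * f i + c.
Proof.
move=> pi_sum; set X := \sum_i pi i * f i.
have split_mean (a b : R) (g : I -> R) :
    \sum_i (a * pi i + b * (pi i * g i)) = a + b * \sum_i pi i * g i.
  by rewrite big_split /= -!mulr_sumr pi_sum mulr1.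
have inner i : \sum_j pi i * pi j * (f i + f j + c) = pi i * (f i + c) + pi i * X.
  by rewrite -split_mean; apply: eq_bigr => j _; ring.
have outer i : pi i * (f i + c) + pi i * X = (X + c) * pi i + 1 * (pi i * f i).
  by ring.
under eq_bigr do rewrite inner outer.
by rewrite split_mean -/X; ring.
Qed.

Theorem mainTheorem10 (R : realFieldType) (V : finType) (d : V -> V -> R)
  (s : R) (pi : V -> R) (L : {set V})
  (d_ge0 : forall i j, 0 <= d i j)
  (d_sym : forall i j, d i j = d j i)
  (d_ii : forall i, d i i = 0)
  (s_ge1 : 1 <= s)
  (d_tri : forall i j k, d i j <= s * (d i k + d k j))
  (pi_gt0 : forall i, 0 < pi i)
  (pi_sum : \sum_(i : V) pi i = 1)
  (avg_d : \sum_(i : V) \sum_(j : V) pi i * pi j * d i j = 2)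
  (L_nonempty : L != set0) :
  \sum_(i in ~: L) pi i * dist_set d i L >= s^-2 - diam d L / 2.
Proof.
set X := \sum_i pi i * dist_set d i L.
have -> : \sum_(i in ~: L) pi i * dist_set d i L = X.
  rewrite /X [RHS](bigID (mem L)) /= [in RHS]big1 ?add0r; last first.
    by move=> i Li; rewrite dist_set_mem ?mulr0.
  by apply: eq_bigl => i; rewrite inE.
have avg_bound : 2 <= s ^+ 2 * (2 * X + diam d L).
  rewrite -{1}avg_d -double_sum_weighted_add // mulr_sumr.
  apply: ler_sum => i _; rewrite mulr_sumr; apply: ler_sum => j _.
  rewrite mulrCA ler_pM2l ?mulr_gt0 //.
  exact: le_dist_set_diam.
have s2_gt0 : 0 < s ^+ 2 by rewrite exprn_gt0 // (lt_le_trans ltr01).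
move: avg_bound; rewrite -ler_pdivrMl // mulrC; lra.
Qed.
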